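(* Let $A$ be an integral domain with quotient field $\mathrm{qf}(A)$. Then the trivial ring extension $A\propto \mathrm{qf}(A)$ is an elementary divisor ring if and only if $A$ is an elementary divisor ring.
   Context: All rings are commutative with identity. For a ring $A$ and an $A$-module $E$, $A\propto E$ is the set of pairs $(a,e)$ with componentwise addition and multiplication $(a,e)(b,f)=(ab,af+be)$. A matrix $M$ (not necessarily square) admits diagonal reduction if there are invertible $P,Q$ with $PMQ$ diagonal $(d_{ij})$ and $d_{ii}\mid d_{(i+1)(i+1)}$ for each $i$; a ring is an elementary divisor ring if every matrix over it admits diagonal reduction. *)

From HB Require Import structures.
From mathcomp Require Import all_boot all_order all_algebra.
From mathcomp Require Import fraction.
Set Implicit Arguments. Unset Strict Implicit. Unset Printing Implicit Defensive.
Import Order.TTheory GRing.Theory.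
Local Open Scope ring_scope.

Definition dvdr (R : comPzRingType) (a b : R) : Prop := exists c : R, b = c * a.

Definition invertible_mx (R : pzRingType) (n : nat) (P : 'M[R]_n) : Prop :=
  exists Q : 'M[R]_n, P *m Q = 1%:M /\ Q *m P = 1%:M.

Definition diagonal_divisibility (R : comPzRingType) (m n : nat) (D : 'M[R]_(m, n)) : Prop :=
  (forall (i : 'I_m) (j : 'I_n), (i : nat) <> (j : nat) -> D i j = 0) /\
  (forall (i i' : 'I_m) (j j' : 'I_n),
      (i : nat) = j -> (i' : nat) = j' -> (i' : nat) = i.+1 ->
      dvdr (D i j) (D i' j')).

Definition admits_diagonal_reduction (R : comPzRingType) (m n : nat) (M : 'M[R]_(m, n)) : Prop :=
  exists (P : 'M[R]_m) (Q : 'M[R]_n),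
    invertible_mx P /\ invertible_mx Q /\ diagonal_divisibility (P *m M *m Q).

Definition elementary_divisor_ring (R : comPzRingType) : Prop :=
  forall (m n : nat) (M : 'M[R]_(m, n)), admits_diagonal_reduction M.

Definition idealization (R : comNzRingType) (E : lmodType R) : Type := (R * E)%type.

Section Idealization.
Variables (R : comNzRingType) (E : lmodType R).
Local Notation T := (idealization E).

HB.instance Definition _ := GRing.Zmodule.copy T (R * E)%type.

Definition ideal_one : T := (1, 0).
Definition ideal_mul (x y : T) : T := (x.1 * y.1, x.1 *: y.2 + y.1 *: x.2).

Lemma ideal_mulA : associative ideal_mul.
Proof.
move=> [a e] [b f] [c g]; rewrite /ideal_mul /=; congr pair; first by rewrite mulrA.
by rewrite !scalerDr !scalerA [c * a]mulrC [c * b]mulrC !addrA.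
Qed.

Lemma ideal_mulC : commutative ideal_mul.
Proof. by move=> [a e] [b f]; rewrite /ideal_mul /= mulrC addrC. Qed.

Lemma ideal_mul1 : left_id ideal_one ideal_mul.
Proof. by move=> [a e]; rewrite /ideal_mul /= mul1r scale1r scaler0 addr0. Qed.

Lemma ideal_mulDl : left_distributive ideal_mul +%R.
Proof.
move=> [a e] [b f] [c g]; rewrite /ideal_mul /=; congr pair; first by rewrite mulrDl.
by rewrite scalerDl scalerDr addrACA.
Qed.

Lemma ideal_one_neq0 : ideal_one != 0.
Proof. apply/negP => /eqP H; have := congr1 fst H; move=> /= /eqP; by rewrite oner_eq0. Qed.

HB.instance Definition _ := GRing.Zmodule_isComNzRing.Build T
  ideal_mulA ideal_mulC ideal_mul1 ideal_mulDl ideal_one_neq0.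
End Idealization.

Definition qf_mod (A : idomainType) : Type := {fraction A}.

Section QfMod.
Variable A : idomainType.
HB.instance Definition _ := GRing.Zmodule.copy (qf_mod A) {fraction A}.

Definition qf_scale (a : A) (x : qf_mod A) : qf_mod A := (@FracField.tofrac A a * (x : {fraction A})).

Lemma qf_scaleA a b v : qf_scale a (qf_scale b v) = qf_scale (a * b) v.
Proof. by rewrite /qf_scale rmorphM mulrA. Qed.
Lemma qf_scale1 : left_id 1 qf_scale.
Proof. by move=> v; rewrite /qf_scale rmorph1 mul1r. Qed.
Lemma qf_scaleDr : right_distributive qf_scale +%R.
Proof. by move=> a u v; rewrite /qf_scale mulrDr. Qed.
Lemma qf_scaleDl v : {morph qf_scale^~ v : a b / a + b}.
Proof. by move=> a b; rewrite /qf_scale rmorphD mulrDl. Qed.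

HB.instance Definition _ := GRing.Zmodule_isLmodule.Build A (qf_mod A)
  qf_scaleA qf_scale1 qf_scaleDr qf_scaleDl.
End QfMod.

(* A matrix admits diagonal reduction as soon as it can be brought, by invertible
   row and column operations, to a matrix whose corner entry divides every entry:
   one then clears the first row and column and recurses.  The projection
   A ∝ K -> A is a ring retraction, which carries reductions from A ∝ K down to A.
   Conversely, reduce the A-components of a matrix over A ∝ K inside A.  If the
   resulting corner d is nonzero it divides everything in A ∝ K, because (d, x)
   divides (a, y) as soon as d divides a in A: the K-components can be divided by d.
   If d = 0 the matrix lies in 0 ∝ K; clearing denominators writes it as
   (0, 1/c) times a matrix over A, which A reduces. *)

From HB Require Import structures.
From mathcomp Require Import all_boot all_algebra fraction generic_quotient zify.
From Stdlib Require Import ClassicalEpsilon.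
Set Implicit Arguments. Unset Strict Implicit. Unset Printing Implicit Defensive.
Import GRing.Theory.
Local Open Scope ring_scope.

Lemma mx_choice (T : Type) m n (P : 'I_m -> 'I_n -> T -> Prop) :
  (forall i j, exists c, P i j c) -> exists C : 'M[T]_(m, n), forall i j, P i j (C i j).
Proof.
move=> H; exists (\matrix_(i, j) proj1_sig (constructive_indefinite_description _ (H i j))).
by move=> i j; rewrite mxE; exact: proj2_sig.
Qed.

Section Divisibility.
Variable R : comPzRingType.

Lemma dvdr_refl (a : R) : dvdr a a.
Proof. by exists 1; rewrite mul1r. Qed.

Lemma dvdr0 (a : R) : dvdr a 0.
Proof. by exists 0; rewrite mul0r. Qed.

Lemma dvdr_trans (a b c : R) : dvdr a b -> dvdr b c -> dvdr a c.
Proof. by move=> [u ->] [v ->]; exists (v * u); rewrite mulrA. Qed.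

Definition dvd_mx m n (a : R) (X : 'M[R]_(m, n)) := exists C, X = a *: C.

Lemma dvd_mxP m n a (X : 'M[R]_(m, n)) : dvd_mx a X <-> forall i j, dvdr a (X i j).
Proof.
split=> [[C ->] i j|H]; first by exists (C i j); rewrite mxE mulrC.
have [C HC] := mx_choice H; exists C.
by apply/matrixP => i j; rewrite mxE HC mulrC.
Qed.

Lemma dvd_mxMlr m n p q a (P : 'M[R]_(m, n)) X (Q : 'M[R]_(p, q)) :
  dvd_mx a X -> dvd_mx a (P *m X *m Q).
Proof. by move=> [C ->]; exists (P *m C *m Q); rewrite scalemxAl scalemxAr. Qed.

Lemma dvd_mxZ m n (z a : R) (X : 'M[R]_(m, n)) : dvd_mx a X -> dvd_mx (z * a) (z *: X).
Proof. by move=> [C ->]; exists C; rewrite scalerA. Qed.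

End Divisibility.

Section Invertibility.
Variable R : pzRingType.

Lemma invertible_mx1 n : invertible_mx (1%:M : 'M[R]_n).
Proof. by exists 1%:M; rewrite mul1mx. Qed.

Lemma invertible_mxM n (P Q : 'M[R]_n) :
  invertible_mx P -> invertible_mx Q -> invertible_mx (P *m Q).
Proof.
move=> [P' [PP' P'P]] [Q' [QQ' Q'Q]]; exists (Q' *m P'); split.
  by rewrite mulmxA -(mulmxA P) QQ' mulmx1 PP'.
by rewrite mulmxA -(mulmxA Q') P'P mulmx1 Q'Q.
Qed.

Lemma invertible_block_diag m n (P1 : 'M[R]_m) (P2 : 'M[R]_n) :
  invertible_mx P1 -> invertible_mx P2 -> invertible_mx (block_mx P1 0 0 P2).
Proof.
move=> [P1' [h1 h1']] [P2' [h2 h2']]; exists (block_mx P1' 0 0 P2').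
by rewrite scalar_mx_block !mulmx_block !mulmx0 !mul0mx !addr0 !add0r h1 h1' h2 h2'.
Qed.

Lemma invertible_lower_unitri m n (v : 'M[R]_(n, m)) :
  invertible_mx (block_mx 1%:M 0 v 1%:M).
Proof.
exists (block_mx 1%:M 0 (- v) 1%:M); rewrite scalar_mx_block.
by rewrite !mulmx_block !mulmx0 !mul0mx !mulmx1 !mul1mx !addr0 !add0r addrN addNr.
Qed.

Lemma invertible_upper_unitri m n (u : 'M[R]_(m, n)) :
  invertible_mx (block_mx 1%:M u 0 1%:M).
Proof.
exists (block_mx 1%:M (- u) 0 1%:M); rewrite scalar_mx_block.
by rewrite !mulmx_block !mulmx0 !mul0mx !mulmx1 !mul1mx !addr0 !add0r addrN addNr.
Qed.

Lemma invertible_mx_cancel0 m n (P : 'M[R]_m) (Q : 'M[R]_n) X :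
  invertible_mx P -> invertible_mx Q -> P *m X *m Q = 0 -> X = 0.
Proof.
move=> [P' [_ P'P]] [Q' [QQ' _]] PXQ0.
rewrite -[X]mul1mx -P'P -[X]mulmx1 -QQ' !mulmxA -(mulmxA P') -(mulmxA P' _ Q).
by rewrite PXQ0 mulmx0 mul0mx.
Qed.

End Invertibility.

Section DiagonalReduction.
Variable R : comPzRingType.

Lemma diagonal_divisibility_block (a : R) m n (D : 'M[R]_(m, n)) :
  diagonal_divisibility D -> dvd_mx a D ->
  diagonal_divisibility (block_mx a%:M 0 0 D : 'M_(1 + m, 1 + n)).
Proof.
move=> [Dd Dc] /dvd_mxP aD; split.
  move=> i j; rewrite -[i]splitK -[j]splitK.
  case: (split i) => i'; case: (split j) => j' /= ij;
    rewrite ?block_mxEul ?block_mxEur ?block_mxEdl ?block_mxEdr ?mxE //.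
    by rewrite !ord1 in ij.
  by apply: Dd => e; apply: ij; rewrite e.
move=> i i' j j'; rewrite -[i]splitK -[j]splitK -[i']splitK -[j']splitK.
case: (split i) => k; case: (split j) => l; case: (split i') => k'; case: (split j') => l' /=;
  rewrite ?block_mxEul ?block_mxEur ?block_mxEdl ?block_mxEdr ?mxE ?ord1 //=;
  try (move=> *; lia).
all: move=> h1 h2 h3.
all: first [ exact: dvdr0 | by rewrite mulr1n; apply: aD | by apply: Dc; lia ].
Qed.

Lemma diagonal_divisibility_corner m n (D : 'M[R]_(m.+1, n.+1)) :
  diagonal_divisibility D -> dvd_mx (D 0 0) D.
Proof.
move=> [Dd Dc]; apply/dvd_mxP => i j.
have [ij|nij] := eqVneq (i : nat) j; last by rewrite (Dd i j); [exact: dvdr0 | exact/eqP].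
suff diag k (i' : 'I_m.+1) (j' : 'I_n.+1) :
  i' = k :> nat -> j' = k :> nat -> dvdr (D 0 0) (D i' j') by exact: (diag i).
elim: k i' j' => [|k IHk] i' j' ik jk.
  have -> : i' = 0 by exact: val_inj.
  have -> : j' = 0 by exact: val_inj.
  exact: dvdr_refl.
have km : (k < m.+1)%N by move: (ltn_ord i'); rewrite ik; lia.
have kn : (k < n.+1)%N by move: (ltn_ord j'); rewrite jk; lia.
apply: dvdr_trans (IHk (Ordinal km) (Ordinal kn) erefl erefl) _.
by apply: Dc => //=; rewrite ik.
Qed.

Definition corner_reducible := forall m n (M : 'M[R]_(m.+1, n.+1)),
  exists P Q, invertible_mx P /\ invertible_mx Q /\
    dvd_mx ((P *m M *m Q) 0 0) (P *m M *m Q).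

Lemma corner_elimination m n (N : 'M[R]_(1 + m, 1 + n)) : dvd_mx (N 0 0) N ->
  exists L Q (N2 : 'M[R]_(m, n)), invertible_mx L /\ invertible_mx Q /\
    dvd_mx (N 0 0) N2 /\ L *m N *m Q = block_mx (N 0 0)%:M 0 0 N2.
Proof.
set a := N 0 0 => -[C NC].
pose u := ursubmx C; pose v := dlsubmx C.
have Nu : ursubmx N = a *: u by rewrite NC; apply/matrixP => i j; rewrite !mxE.
have Nv : dlsubmx N = a *: v by rewrite NC; apply/matrixP => i j; rewrite !mxE.
have Na : ulsubmx N = a%:M.
  have lshift0 p : lshift p (0 : 'I_1) = 0 by exact: val_inj.
  by rewrite [LHS]mx11_scalar !mxE !lshift0.
pose N2 := drsubmx N - v *m ursubmx N.
exists (block_mx 1%:M 0 (- v) 1%:M), (block_mx 1%:M (- u) 0 1%:M), N2.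
split; first exact: invertible_lower_unitri.
split; first exact: invertible_upper_unitri.
split.
  exists (drsubmx C - v *m u).
  by rewrite /N2 Nu -scalemxAr scalerBr NC; congr (_ - _); apply/matrixP => i j; rewrite !mxE.
rewrite -[N in LHS]submxK Na Nu Nv /N2 !mulmx_block !mulmx0 !mul0mx !mulmx1 !mul1mx !addr0.
rewrite !mulmxN !mulNmx mul_mx_scalar mul_scalar_mx !addNr mul0mx oppr0 add0r.
by rewrite Nu addrC.
Qed.

Lemma admits_diagonal_reduction_corner m n (N : 'M[R]_(1 + m, 1 + n)) :
  dvd_mx (N 0 0) N -> (forall N2 : 'M[R]_(m, n), admits_diagonal_reduction N2) ->
  admits_diagonal_reduction N.
Proof.
move=> /corner_elimination [L [Q [N2 [invL [invQ [aN2 LNQ]]]]]] reduce.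
have [P2 [Q2 [invP2 [invQ2 D2]]]] := reduce N2.
exists (block_mx 1%:M 0 0 P2 *m L), (Q *m block_mx 1%:M 0 0 Q2).
split; first by apply: invertible_mxM => //; apply: invertible_block_diag => //; exact: invertible_mx1.
split; first by apply: invertible_mxM => //; apply: invertible_block_diag => //; exact: invertible_mx1.
rewrite !mulmxA -(mulmxA _ L) -(mulmxA _ (L *m N)) LNQ.
rewrite !mulmx_block !mulmx0 !mul0mx !mulmx1 !mul1mx !addr0 !add0r !mul0mx.
by apply: diagonal_divisibility_block => //; exact: dvd_mxMlr.
Qed.

Lemma edrP : elementary_divisor_ring R <-> corner_reducible.
Proof.
split=> [edr m n M|corner m].
  have [P [Q [invP [invQ D]]]] := edr _ _ M.
  by exists P, Q; split; [|split; last exact: diagonal_divisibility_corner].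
elim: m => [|m IHm] [|n] M; try solve [exists 1%:M, 1%:M;
  split; [exact: invertible_mx1 | split; first exact: invertible_mx1];
  split=> [[i ?] [j ?] | [i ?] ? [j ?] *]; lia].
have [P [Q [invP [invQ PMQ]]]] := corner _ _ M.
have [P2 [Q2 [invP2 [invQ2 D]]]] := admits_diagonal_reduction_corner PMQ (IHm n).
exists (P2 *m P), (Q *m Q2).
split; [exact: invertible_mxM | split; first exact: invertible_mxM].
by rewrite !mulmxA in D *.
Qed.

End DiagonalReduction.

Section RingMorphisms.
Variables S T : comPzRingType.
Variable f : {rmorphism S -> T}.

Lemma invertible_map_mx n (P : 'M[S]_n) : invertible_mx P -> invertible_mx (map_mx f P).
Proof.
by move=> [P' [PP' P'P]]; exists (map_mx f P'); rewrite -!map_mxM PP' P'P !map_mx1.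
Qed.

Lemma diagonal_divisibility_map m n (D : 'M[S]_(m, n)) :
  diagonal_divisibility D -> diagonal_divisibility (map_mx f D).
Proof.
move=> [Dd Dc]; split=> [i j ij|i i' j j' ij i'j' i'i]; first by rewrite mxE Dd ?rmorph0.
have [c Dc'] := Dc i i' j j' ij i'j' i'i.
by exists (f c); rewrite !mxE Dc' rmorphM.
Qed.

Lemma dvd_mx_map m n a (X : 'M[S]_(m, n)) : dvd_mx a X -> dvd_mx (f a) (map_mx f X).
Proof. by move=> [C ->]; exists (map_mx f C); rewrite map_mxZ. Qed.

Lemma elementary_divisor_ring_retract (g : {rmorphism T -> S}) :
  cancel g f -> elementary_divisor_ring S -> elementary_divisor_ring T.
Proof.
move=> gK edr m n M.
have [P [Q [invP [invQ D]]]] := edr _ _ (map_mx g M).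
exists (map_mx f P), (map_mx f Q).
split; [exact: invertible_map_mx | split; first exact: invertible_map_mx].
have -> : map_mx f P *m M *m map_mx f Q = map_mx f (P *m map_mx g M *m Q).
  by rewrite !map_mxM; congr (_ *m _ *m _); apply/matrixP => i j; rewrite !mxE gK.
exact: diagonal_divisibility_map.
Qed.

Lemma corner_reducible_scale_map : corner_reducible S ->
  forall m n (z : T) (L : 'M[S]_(m.+1, n.+1)), exists P Q,
    invertible_mx P /\ invertible_mx Q /\
    let N := P *m (z *: map_mx f L) *m Q in dvd_mx (N 0 0) N.
Proof.
move=> corner m n z L; have [P [Q [invP [invQ E]]]] := corner _ _ L.
exists (map_mx f P), (map_mx f Q).
split; [exact: invertible_map_mx | split; first exact: invertible_map_mx].
rewrite /= -scalemxAr -scalemxAl -!map_mxM [X in dvd_mx X]mxE [X in _ * X]mxE.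
exact/dvd_mxZ/dvd_mx_map.
Qed.

End RingMorphisms.

Section IdealizationProjection.
Variables (R : comNzRingType) (E : lmodType R).
Local Notation T := (idealization E).

Lemma idealization_mulE (x y : T) : x * y = (x.1 * y.1, x.1 *: y.2 + y.1 *: x.2).
Proof. by []. Qed.

Definition ideal_fst (x : T) : R := x.1.
Definition ideal_base (a : R) : T := (a, 0).

Lemma ideal_fst_zmod_morphism : zmod_morphism ideal_fst. Proof. by []. Qed.
HB.instance Definition _ := GRing.isZmodMorphism.Build T R ideal_fst ideal_fst_zmod_morphism.
Lemma ideal_fst_monoid_morphism : monoid_morphism ideal_fst. Proof. by []. Qed.
HB.instance Definition _ := GRing.isMonoidMorphism.Build T R ideal_fst ideal_fst_monoid_morphism.

Lemma ideal_base_zmod_morphism : zmod_morphism ideal_base.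
Proof. by move=> a b; congr pair; rewrite subr0. Qed.
HB.instance Definition _ := GRing.isZmodMorphism.Build R T ideal_base ideal_base_zmod_morphism.
Lemma ideal_base_monoid_morphism : monoid_morphism ideal_base.
Proof. by split=> // a b; rewrite /ideal_base idealization_mulE /= !scaler0 addr0. Qed.
HB.instance Definition _ := GRing.isMonoidMorphism.Build R T ideal_base ideal_base_monoid_morphism.

Lemma ideal_baseK : cancel ideal_base ideal_fst. Proof. by []. Qed.

Lemma elementary_divisor_ring_idealization_base :
  elementary_divisor_ring T -> elementary_divisor_ring R.
Proof. exact: elementary_divisor_ring_retract ideal_baseK. Qed.

End IdealizationProjection.
Arguments ideal_fst {R E}.
Arguments ideal_base {R E}.

Section IdealizationOfFractions.
Variable A : idomainType.
Local Notation K := {fraction A}.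
Local Notation tofrac := (@FracField.tofrac A).
Local Notation T := (idealization (qf_mod A)).
Local Open Scope quotient_scope.

Lemma fraction_clear_den (x : K) : exists n d, d != 0 /\ x * tofrac d = tofrac n.
Proof.
elim/quotW: x => r; exists r.1, r.2; split; first exact: denom_ratioP.
change (FracField.mul (\pi r) (FracField.tofrac r.2) = FracField.tofrac r.1).
unlock FracField.tofrac; rewrite -FracField.pi_mul.
apply/eqmodP; rewrite /= FracField.equivfE /FracField.mulf /=.
by rewrite !numden_Ratio ?mulf_neq0 ?denom_ratioP ?oner_neq0 // !mulr1 mulrC.
Qed.

Lemma seq_common_den (s : seq K) : exists c, c != 0 /\
  forall x, x \in s -> exists a, tofrac a = tofrac c * x.
Proof.
elim: s => [|x s [c [c0 cs]]]; first by exists 1; rewrite oner_neq0.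
have [n [d [d0 xd]]] := fraction_clear_den x.
exists (c * d); split=> [|y]; first by rewrite mulf_neq0.
rewrite inE => /predU1P [->|ys].
  by exists (c * n); rewrite !tofracM -xd -mulrA [tofrac d * _]mulrC.
have [a ay] := cs y ys; exists (d * a).
by rewrite !tofracM ay mulrA [tofrac d * _]mulrC.
Qed.

Lemma mx_common_den m n (X : 'M[K]_(m, n)) : exists c (L : 'M[A]_(m, n)),
  c != 0 /\ forall i j, tofrac (L i j) = tofrac c * X i j.
Proof.
have [c [c0 cX]] := seq_common_den [seq X ij.1 ij.2 | ij <- enum {: 'I_m * 'I_n}].
have cXij i j : exists a, tofrac a = tofrac c * X i j.
  by apply: cX; apply/mapP; exists (i, j); rewrite ?mem_enum.
by have [L XL] := mx_choice cXij; exists c, L.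
Qed.

(* [(d, x)] divides [(a, y)]: take [(c, (y - c x) / d)] where [a = c d]. *)
Lemma dvdr_idealization (p q : T) : p.1 != 0 -> dvdr p.1 q.1 -> dvdr p q.
Proof.
case: p => d x; case: q => a y /= d0 [c ->].
have d0' : tofrac d != 0 by rewrite tofrac_eq0.
exists (c, ((y : K) - tofrac c * (x : K)) / tofrac d : qf_mod A).
rewrite idealization_mulE /=; congr pair.
change ((y : K) = tofrac c * (x : K) + tofrac d * (((y : K) - tofrac c * (x : K)) / tofrac d)).
by rewrite [tofrac d * _]mulrC divfK // addrC subrK.
Qed.

Lemma dvd_mx_idealization m n (N : 'M[T]_(m.+1, n.+1)) (D : 'M[A]_(m.+1, n.+1)) :
  map_mx ideal_fst N = D -> D 0 0 != 0 -> dvd_mx (D 0 0) D -> dvd_mx (N 0 0) N.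
Proof.
move=> <-; rewrite mxE => N00 /dvd_mxP ND; apply/dvd_mxP => i j.
by apply: dvdr_idealization => //; have := ND i j; rewrite !mxE.
Qed.

Lemma ideal_fst_mx0_scale_base m n (M : 'M[T]_(m, n)) : map_mx ideal_fst M = 0 ->
  exists z (L : 'M[A]_(m, n)), M = z *: map_mx ideal_base L.
Proof.
move=> M0; have [c [L [c0 cL]]] := mx_common_den (\matrix_(i, j) ((M i j).2 : K)).
exists (0, (tofrac c)^-1 : qf_mod A), L; apply/matrixP => i j.
have /matrixP/(_ i j) := M0; rewrite !mxE /ideal_fst /ideal_base.
have := cL i j; rewrite mxE; case: (M i j) => a y /= cy ->.
rewrite idealization_mulE /= mul0r; congr pair.
change (y = (0 : A) *: (0 : qf_mod A) + tofrac (L i j) * (tofrac c)^-1 :> K).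
by rewrite scaler0 add0r cy mulrC mulKf // tofrac_eq0.
Qed.

Lemma map_mx_ideal_baseK m n (X : 'M[A]_(m, n)) :
  map_mx ideal_fst (map_mx ideal_base X :> 'M[T]_(m, n)) = X.
Proof. by apply/matrixP => i j; rewrite !mxE. Qed.

Lemma corner_reducible_idealization : corner_reducible A -> corner_reducible T.
Proof.
move=> cornerA m n M.
have [P0 [Q0 [invP0 [invQ0 D]]]] := cornerA _ _ (map_mx ideal_fst M).
have [D00|D00] := eqVneq ((P0 *m map_mx ideal_fst M *m Q0) 0 0) 0.
  have /ideal_fst_mx0_scale_base [z [L ->]] : map_mx ideal_fst M = 0.
    by apply: invertible_mx_cancel0 invP0 invQ0 _; case: D => C ->; rewrite D00 scale0r.
  exact: corner_reducible_scale_map.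
exists (map_mx ideal_base P0), (map_mx ideal_base Q0).
split; [exact: invertible_map_mx | split; first exact: invertible_map_mx].
apply: dvd_mx_idealization D00 D.
by rewrite !map_mxM !map_mx_ideal_baseK.
Qed.

End IdealizationOfFractions.

Theorem corollary3p13 (A : idomainType) :
  elementary_divisor_ring (idealization (qf_mod A)) <-> elementary_divisor_ring A.
Proof.
split; first exact: elementary_divisor_ring_idealization_base.
by move/edrP/corner_reducible_idealization/edrP.
Qed.
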